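(* Let $E$ and $H$ be finite directed graphs and let $\xi^{0},\xi^{1}:H\to E$ be an embedding pair, with associated self-similar groupoid action $(G_{\xi},E)$. Then, on $E^{-\infty}$, the equivalence relation $\sim_{\xi}$ is equal to the asymptotic equivalence relation $\sim_{ae}$ of $(G_{\xi},E)$. Consequently $(\sigma_{\xi},\mathcal{J}_{\xi})=(\tilde{\sigma},\mathcal{J}_{G_{\xi},E})$.
   Context: A directed graph $E=(E^0,E^1,r,s)$ has vertices $E^0$, edges $E^1$, range and source maps $r,s:E^1\to E^0$. A finite path of length $n$ is $\mu=\mu_1\cdots\mu_n$ with $s(\mu_i)=r(\mu_{i+1})$; vertices are paths of length $0$; $E^*$ is the set of finite paths, $r(\mu)=r(\mu_1)$, $s(\mu)=s(\mu_n)$, and $vE^*$ denotes paths with range $v$. $E^{-\infty}$ is the set of left-infinite paths $\mu=\cdots\mu_{-2}\mu_{-1}$ (edges with $s(\mu_i)=r(\mu_{i+1})$), with the product topology, and the shift $\sigma:E^{-\infty}\to E^{-\infty}$ is $\sigma(\cdots\mu_{-3}\mu_{-2}\mu_{-1})=\cdots\mu_{-3}\mu_{-2}$. An embedding pair consists of two injective graph homomorphisms $\xi^0,\xi^1:H\to E$ with $\xi^0|_{H^0}=\xi^1|_{H^0}$ and $\xi^0(H^1)\cap\xi^1(H^1)=\emptyset$. Put $H^0_\xi=\xi^0(H^0)$ and $H^1_\xi=\xi^0(H^1)\cup\xi^1(H^1)$. The groupoid $\tilde G_\xi=\mathbb{Z}\times E^0$ is the group bundle where $(m,v),(n,w)$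 are composable iff $v=w$, with $(m,v)(n,v)=(m+n,v)$, and domain = codomain = $v$. For $(m,v)$ and $e\in vE^1$ define: if $e\notin H^1_\xi$, $(m,v)\cdot e=e$ and $(m,v)|_e=(0,s(e))$; if $e=\xi^i(h)$ with $h\in H^1$, $i\in\{0,1\}$, write $m+i=2n+j$ with $j\in\{0,1\}$, $n\in\mathbb{Z}$, and set $(m,v)\cdot e=\xi^j(h)$, $(m,v)|_e=(n,s(e))$. This extends recursively to an action on finite paths by $g\cdot(e\nu)=(g\cdot e)(g|_e\cdot\nu)$ with $g|_{e\nu}=(g|_e)|_\nu$. $G_\xi$ is the quotient of $\tilde G_\xi$ by the elements acting trivially on $E^*$; it acts faithfully and self-similarly on $E^*$ (restrictions descend), giving the self-similar groupoid action $(G_\xi,E)$. Asymptotic equivalence: for $\mu,\nu\in E^{-\infty}$, $\mu\sim_{ae}\nu$ iff there are a finite set $F\subseteq G_\xi$ and $(g_n)_{n<0}\subseteq F$ with $d(g_n)=r(\mu_n)$ and $g_n\cdot\mu_n\cdots\mu_{-1}=\nu_n\cdots\nu_{-1}$ for all $n<0$. The limit space $\mathcal{J}_{G_\xi,E}=E^{-\infty}/\sim_{ae}$ (quotient topology) with $\tilde\sigma$ induced by $\sigma$. The relation $\sim_\xi$: $\mu\sim_\xi\nu$ iff $\mu=\nu$, or there are $n<0$, $i\in\{0,1\}$ and $(y_k)_{k\le n}\subseteq H^1$ with $\mu_k=\xi^i(y_k)$ and $\nu_k=\xi^{1-i}(y_k)$ for all $k\le n$, and one of: (1) $n=-1$;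 (2) $n<-1$, $\mu_j=\nu_j$ for all $j>n+1$, and there is $y_{n+1}\in H^1$ with $\mu_{n+1}=\xi^{1-i}(y_{n+1})$, $\nu_{n+1}=\xi^i(y_{n+1})$; (3) $n<-1$, $\mu_j=\nu_j$ for all $j\ge n+1$, and $\mu_{n+1}=\nu_{n+1}\notin H^1_\xi$. $\mathcal{J}_\xi=E^{-\infty}/\sim_\xi$ with $\sigma_\xi$ induced by $\sigma$. *)

From mathcomp Require Import all_boot all_order all_algebra.
Set Implicit Arguments. Unset Strict Implicit. Unset Printing Implicit Defensive.
Import GRing.Theory Num.Theory.

(* A finite path mu_1 ... mu_n is a sequence [:: mu_1; ...; mu_n] with
   sE mu_i = rE mu_(i+1); its range is rE mu_1.
   A left-infinite path ... mu_(-2) mu_(-1) is a function mu : nat -> E with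
   mu k = mu_(-(k+1)); the path condition s(mu_(-(k+2))) = r(mu_(-(k+1))) is
   sE (mu k.+1) = rE (mu k). *)

Section SelfSimilar.
Variables (V E HV HE : finType).
Variables (rE sE : E -> V) (rH sH : HE -> HV).
Variables (x0v x1v : HV -> V) (x0e x1e : HE -> E).

Definition graph_emb (xv : HV -> V) (xe : HE -> E) : Prop :=
  [/\ injective xv, injective xe,
      forall h, rE (xe h) = xv (rH h) & forall h, sE (xe h) = xv (sH h)].

Definition embedding_pair : Prop :=
  [/\ graph_emb x0v x0e, graph_emb x1v x1e,
      (forall v, x0v v = x1v v) & forall h h', x0e h <> x1e h'].

Definition xie (i : bool) : HE -> E := if i then x1e else x0e.

Definition inH1 (e : E) : bool := [exists h, (x0e h == e) || (x1e h == e)].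

(* For g = (m, r e) in tilde G_xi and the edge e: returns (g.e, integer part of g|_e);
   the vertex part of g|_e is always s(e). *)
Definition act_edge_from (m : int) (i : bool) (h : HE) : E * int :=
  let k := (m + (i : int))%R in
  (xie ((k %% 2)%Z != 0%R) h, (k %/ 2)%Z).

Definition act_edge (m : int) (e : E) : E * int :=
  match [pick h | x0e h == e] with
  | Some h => act_edge_from m false h
  | None =>
    match [pick h | x1e h == e] with
    | Some h => act_edge_from m true h
    | None => (e, 0%R)
    end
  end.

(* action of (m, r(p)) on a finite path p, via g.(e nu) = (g.e)(g|_e . nu) *)
Fixpoint act (m : int) (p : seq E) : seq E :=
  match p with
  | [::] => [::]
  | e :: p' => let: (e', n) := act_edge m e in e' :: act n p'
  end.

Definition fpath (v : V) (p : seq E) : bool :=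
  match p with
  | [::] => true
  | e :: p' => (rE e == v) && path (fun a b => sE a == rE b) e p'
  end.

(* The groupoid G_xi is the quotient of tilde G_xi = Z x E^0 by the elements
   acting trivially on E^*; two elements of tilde G_xi have the same image in
   G_xi iff they have the same unit and act identically on paths. *)
Definition Gxi_eq (g g' : int * V) : Prop :=
  g.2 = g'.2 /\ forall p, fpath g.2 p -> act g.1 p = act g'.1 p.

Definition linf (mu : nat -> E) : Prop := forall k, sE (mu k.+1) = rE (mu k).

(* the finite tail mu_(-(k+1)) ... mu_(-1) *)
Definition tail (mu : nat -> E) (k : nat) : seq E := rev (mkseq mu k.+1).

(* asymptotic equivalence: a finite set F of G_xi (given by a finite list of
   representatives in tilde G_xi) and g_n (n = -(k+1)) with values in F. *)
Definition ae_equiv (mu nu : nat -> E) : Prop :=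
  exists (F : seq (int * V)) (g : nat -> int * V),
    forall k,
      [/\ exists2 h, h \in F & Gxi_eq h (g k),
          (g k).2 = rE (mu k) &
          act (g k).1 (tail mu k) = tail nu k].

(* the relation ~_xi ; n = -(k+1), index j <= n  <-> j' >= k *)
Definition xi_rel (mu nu : nat -> E) : Prop :=
  mu = nu \/
  exists (k : nat) (i : bool) (y : nat -> HE),
    (forall j, k <= j -> mu j = xie i (y j) /\ nu j = xie (~~ i) (y j)) /\
    [\/ k = 0,
        0 < k /\ (forall j, j < k.-1 -> mu j = nu j) /\
          (exists y1, mu k.-1 = xie (~~ i) y1 /\ nu k.-1 = xie i y1)
      | 0 < k /\ (forall j, j <= k.-1 -> mu j = nu j) /\ ~~ inH1 (mu k.-1)].

End SelfSimilar.

From Pilot Require Import Defs.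
From mathcomp Require Import all_boot all_order all_algebra zify.
From Stdlib Require Import Classical_Prop FunctionalExtensionality.
Set Implicit Arguments. Unset Strict Implicit. Unset Printing Implicit Defensive.

(* The element (1, v) of G_xi acts as an odometer: it swaps xi^0(h) and
   xi^1(h) and carries (restricts to a non-unit) only through xi^1(h), while
   (-1, v) carries only through xi^0(h).  On an H-edge, (m, v) restricts to
   ((m + i) div 2, s(e)), so after finitely many edges every element of a
   finite set has become (-1), (0) or (1): mu ~ae nu iff every tail of nu is
   the image of the tail of mu under one of these three.  Following the carry
   of (+-1) from the left down to the first index where mu and nu differ, it
   runs through a left-infinite block of swapped H-edges and then either never
   stops, stops on a swapped edge, or is absorbed by an edge outside H^1_xi:
   the three cases of ~xi. *)

Section OdometerAction.
Variables (V E HE : finType) (rE sE : E -> V) (x0e x1e : HE -> E).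
Hypotheses (x0e_inj : injective x0e) (x1e_inj : injective x1e).
Hypothesis x0e_x1e_disj : forall h h', x0e h <> x1e h'.

Local Notation xie := (xie x0e x1e).
Local Notation inH1 := (inH1 x0e x1e).
Local Notation act_edge := (act_edge x0e x1e).
Local Notation act := (act x0e x1e).

Lemma xie_inj b h b' h' : xie b h = xie b' h' -> b = b' /\ h = h'.
Proof.
case: b; case: b' => /= eq_e.
- by split; last exact: x1e_inj.
- by case: (x0e_x1e_disj (esym eq_e)).
- by case: (x0e_x1e_disj eq_e).
- by split; last exact: x0e_inj.
Qed.

Variant edge_spec (e : E) : Prop :=
  | EdgeOutside of ~~ inH1 e
  | EdgeInside b h of e = xie b h.

Lemma edgeP e : edge_spec e.
Proof.
have [/existsP [h /orP [] /eqP <-]|] := boolP (inH1 e); last exact: EdgeOutside.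
- exact: (@EdgeInside _ false h).
- exact: (@EdgeInside _ true h).
Qed.

Lemma act_edge_xie m b h : act_edge m (xie b h) = act_edge_from x0e x1e m b h.
Proof.
rewrite /Defs.act_edge; case: b => /=.
- case: pickP => [h' /eqP eq_e|_]; first by case: (x0e_x1e_disj eq_e).
  by case: pickP => [h' /eqP /x1e_inj -> //|/(_ h)]; rewrite eqxx.
- by case: pickP => [h' /eqP /x0e_inj -> //|/(_ h)]; rewrite eqxx.
Qed.

Lemma act_edge_outside m e : ~~ inH1 e -> act_edge m e = (e, 0%R).
Proof.
move=> /existsPn e_out; rewrite /Defs.act_edge.
case: pickP => [h /= x0e_h|_]; first by move: (e_out h); rewrite x0e_h.
by case: pickP => [h /= x1e_h|_] //; move: (e_out h); rewrite x1e_h orbT.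
Qed.

Lemma act_edge0 e : act_edge 0 e = (e, 0%R).
Proof.
by case: (edgeP e) => [/act_edge_outside -> //|[] h ->]; rewrite act_edge_xie.
Qed.

Lemma act_edge_restr_bound m e :
  absz (act_edge m e).2 <= maxn 1 (absz m).-1.
Proof.
case: (edgeP e) => [/act_edge_outside -> /=|b h ->]; first by lia.
by rewrite act_edge_xie /act_edge_from; case: b => /=; lia.
Qed.

Lemma act_cons m e p :
  act m (e :: p) = (act_edge m e).1 :: act (act_edge m e).2 p.
Proof. by rewrite /=; case: (act_edge m e). Qed.

Lemma act0 p : act 0 p = p.
Proof. by elim: p => [//|e p IHp]; rewrite act_cons act_edge0 /= IHp. Qed.

Definition sign (i : bool) : int := if i then 1%R else (-1)%R.

Lemma sign_of_small (r : int) : absz r <= 1 -> r != 0%R -> exists i, r = sign i.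
Proof.
move=> r_le1 r_neq0; have [->|->] : r = 1%R \/ r = (-1)%R by lia.
- by exists true.
- by exists false.
Qed.

Lemma act_edge_sign_xie i b h :
  act_edge (sign i) (xie b h) = (xie (~~ b) h, if b == i then sign i else 0%R).
Proof. by rewrite act_edge_xie; case: i; case: b. Qed.

Lemma act_edge_sign_carry i e :
  (act_edge (sign i) e).2 != 0%R -> exists h, e = xie i h.
Proof.
case: (edgeP e) => [/act_edge_outside -> //|b h ->].
rewrite act_edge_sign_xie /=; case: (eqVneq b i) => [-> _|_]; first by exists h.
by rewrite eqxx.
Qed.

Local Notation tail := Defs.tail.

Lemma tailS (mu : nat -> E) j : tail mu j.+1 = mu j.+1 :: tail mu j.
Proof. by rewrite /Defs.tail mkseqS rev_rcons. Qed.

Lemma tail_cons (mu : nat -> E) j :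
  tail mu j = mu j :: (if j is j'.+1 then tail mu j' else [::]).
Proof. by case: j => [|j] //; rewrite tailS. Qed.

Lemma tail_eqE (mu nu : nat -> E) j :
  tail mu j = tail nu j <-> (forall j', j' <= j -> mu j' = nu j').
Proof.
rewrite /Defs.tail; split => [/(can_inj revK) /eq_in_map eq_mu j' le_j'j|eq_mu].
  by apply: eq_mu; rewrite mem_iota.
by congr rev; apply/eq_in_map => j'; rewrite mem_iota => /andP [_]; exact: eq_mu.
Qed.

Lemma act_tail_shrink (mu nu : nat -> E) j n m :
  act m (tail mu (j + n)) = tail nu (j + n) ->
  exists2 r, absz r <= maxn 1 (absz m - n) & act r (tail mu j) = tail nu j.
Proof.
elim: n m => [|n IHn] m; first by rewrite addn0 subn0 => ?; exists m => //; lia.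
rewrite addnS !tailS act_cons => -[_ /IHn [r r_le eq_tail]]; exists r => //.
by have := act_edge_restr_bound m (mu (j + n).+1); lia.
Qed.

Definition flipped (i : bool) (e e' : E) : Prop :=
  exists h, e = xie i h /\ e' = xie (~~ i) h.

Lemma flipped_sign_uniq i i' e e' e'' : flipped i e e' -> flipped i' e e'' -> i = i'.
Proof. by move=> [h [-> _]] [h' [/xie_inj [-> _] _]]. Qed.

Lemma act_sign_tailS (mu nu : nat -> E) i j :
  flipped i (mu j.+1) (nu j.+1) ->
  act (sign i) (tail mu j) = tail nu j ->
  act (sign i) (tail mu j.+1) = tail nu j.+1.
Proof.
move=> [h [mu_e nu_e]] eq_tail.
by rewrite !tailS act_cons mu_e act_edge_sign_xie eqxx nu_e eq_tail.
Qed.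

Lemma act_sign_tailS_inv (mu nu : nat -> E) i j :
  tail mu j != tail nu j ->
  act (sign i) (tail mu j.+1) = tail nu j.+1 ->
  flipped i (mu j.+1) (nu j.+1) /\ act (sign i) (tail mu j) = tail nu j.
Proof.
move=> neq_tail; rewrite !tailS act_cons => -[nu_e eq_tail].
have carry : (act_edge (sign i) (mu j.+1)).2 != 0%R.
  by apply: contraNneq neq_tail => carry0; rewrite -eq_tail carry0 act0.
have [h mu_e] := act_edge_sign_carry carry.
move: nu_e eq_tail; rewrite mu_e act_edge_sign_xie eqxx /= => nu_e eq_tail.
by split => //; exists h.
Qed.

Lemma act_sign_tail_up (mu nu : nat -> E) i a :
  act (sign i) (tail mu a) = tail nu a ->
  (forall j, a < j -> flipped i (mu j) (nu j)) ->
  forall j, a <= j -> act (sign i) (tail mu j) = tail nu j.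
Proof.
move=> eq_a run j /subnK <-; elim: (j - a) => [//|n IHn].
by rewrite addSn; apply: act_sign_tailS => //; apply: run; lia.
Qed.

Lemma act_sign_tail_down (mu nu : nat -> E) i a n :
  tail mu a != tail nu a ->
  act (sign i) (tail mu (n + a)) = tail nu (n + a) ->
  (forall j, a < j <= n + a -> flipped i (mu j) (nu j)) /\
  act (sign i) (tail mu a) = tail nu a.
Proof.
move=> neq_a; elim: n => [eq_a|n IHn]; first by split => // j; lia.
rewrite addSn => /act_sign_tailS_inv [].
  apply: contra_neq neq_a => /tail_eqE eq_mu.
  by apply/tail_eqE => j le_ja; apply: eq_mu; lia.
move=> flip_top /IHn [run eq_a]; split => // j /andP [lt_aj]; rewrite leq_eqVlt ltnS.
by case/orP => [/eqP -> //|le_j]; apply: run; rewrite lt_aj.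
Qed.

(* At the first index [d] where the paths differ, the carry of [sign i]
   either dies at [mu d], or passes through it and must then be absorbed by
   [mu d.-1 = nu d.-1], which forces that edge to lie outside H^1_xi. *)
Lemma act_sign_first_diff (mu nu : nat -> E) i d :
  act (sign i) (tail mu d) = tail nu d -> mu d != nu d ->
  (forall j, j < d -> mu j = nu j) ->
  (flipped i (mu d) (nu d) /\ (0 < d -> ~~ inH1 (mu d.-1)))
  \/ flipped (~~ i) (mu d) (nu d).
Proof.
rewrite (tail_cons mu) (tail_cons nu) act_cons => -[nu_e eq_below] neq_d eq_mu.
case: (edgeP (mu d)) nu_e eq_below => [out|b h mu_e].
  rewrite (act_edge_outside _ out) /= => nu_e.
  by rewrite nu_e eqxx in neq_d.
rewrite mu_e act_edge_sign_xie /=; case: ifP => [/eqP b_i|/negbT b_neq_i] nu_e; last first.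
  by right; exists h; rewrite -nu_e; case: b i b_neq_i {mu_e nu_e} => [] [].
left; split; first by exists h; rewrite -nu_e b_i.
case: d eq_mu eq_below {neq_d mu_e nu_e} => [//|d] eq_mu /= eq_below _.
case: (edgeP (mu d)) => [//|b' h' mu_e'].
have := eq_mu d (ltnSn d); rewrite mu_e' => nu_e'.
move: eq_below; rewrite (tail_cons mu) (tail_cons nu) act_cons mu_e'.
rewrite act_edge_sign_xie -nu_e' => -[].
by case/xie_inj; case: b' {mu_e' nu_e'}.
Qed.

Lemma choose_flips (mu nu : nat -> E) i (P : pred nat) (h0 : HE) :
  (forall j, P j -> flipped i (mu j) (nu j)) ->
  exists y : nat -> HE, forall j, P j -> mu j = xie i (y j) /\ nu j = xie (~~ i) (y j).
Proof.
move=> flips; exists (fun j => odflt h0 [pick h | mu j == xie i h]).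
move=> j /flips [h [mu_e nu_e]].
case: pickP => [h' /eqP /= |/(_ h)]; last by rewrite mu_e eqxx.
by rewrite mu_e => /xie_inj [_ <-].
Qed.

Definition ae1 (mu nu : nat -> E) : Prop :=
  forall j, exists2 r : int, absz r <= 1 & act r (tail mu j) = tail nu j.

Lemma ae1_of_ae (mu nu : nat -> E) :
  linf rE sE mu -> ae_equiv rE sE x0e x1e mu nu -> ae1 mu nu.
Proof.
move=> mu_path [F [g Hg]] j.
pose B := (\max_(h <- F) absz h.1).
have [[h hF [eq_unit eq_act]] g_unit g_act] := Hg (j + B).
have fpath_tail : Defs.fpath rE sE h.2 (tail mu (j + B)).
  rewrite eq_unit g_unit /Defs.fpath tail_cons eqxx /=.
  by elim: (j + B) => [//|n IHn] /=; rewrite tail_cons /= mu_path eqxx IHn.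
move: g_act; rewrite -eq_act // => /act_tail_shrink [r r_le eq_tail].
have h_le : absz h.1 <= B.
  exact: (@leq_bigmax_seq _ F xpredT (fun h => absz h.1)).
by exists r => //; move/eqP: h_le r_le => ->.
Qed.

Lemma ae_of_ae1 (mu nu : nat -> E) : ae1 mu nu -> ae_equiv rE sE x0e x1e mu nu.
Proof.
move=> mu_nu.
have ex_r j : exists r : int, (absz r <= 1) && (act r (tail mu j) == tail nu j).
  by have [r r_le /eqP eq_tail] := mu_nu j; exists r; rewrite r_le.
exists [seq (m, v) | m <- [:: (-1)%R; 0%R; 1%R], v <- enum V].
exists (fun j => (xchoose (ex_r j), rE (mu j))) => j.
have /andP [r_le /eqP eq_tail] := xchooseP (ex_r j).
split=> //; exists (xchoose (ex_r j), rE (mu j)); last by [].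
by apply: allpairs_f; rewrite ?mem_enum //; move: r_le; rewrite !inE; lia.
Qed.

Lemma ae1_of_xi_rel (mu nu : nat -> E) : xi_rel x0e x1e mu nu -> ae1 mu nu.
Proof.
case=> [<- j|[k [i [y [run shape]]]]]; first by exists 0%R; rewrite ?act0.
have eq_below j : j < k.-1 -> mu j = nu j.
  by case: shape => [->|[_ [eq_mu _]]|[_ [eq_mu _]]] //; move=> ?; apply: eq_mu; lia.
have base : act (sign i) (tail mu k.-1) = tail nu k.-1.
  have eq_rest : (if k.-1 is j.+1 then tail mu j else [::]) =
                 (if k.-1 is j.+1 then tail nu j else [::]).
    by case: k.-1 eq_below => [//|j] eq_below; apply/tail_eqE => j' ?; apply: eq_below; lia.
  rewrite (tail_cons mu) (tail_cons nu) act_cons.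
  case: shape eq_rest => [k0|[_ [_ [y1 [-> ->]]]]|[_ [eq_mu out]]] eq_rest.
  - by rewrite k0 in run *; have [-> ->] := run 0 erefl; rewrite act_edge_sign_xie eqxx.
  - rewrite act_edge_sign_xie negbK (_ : (~~ i == i) = false) ?act0 ?eq_rest //.
    by case: (i).
  - by rewrite (act_edge_outside _ out) act0 eq_mu // eq_rest.
move=> j; exists (if j < k.-1 then 0%R else sign i); first by case: ifP; case: (i).
case: ifPn => [lt_jk|]; first by rewrite act0; apply/tail_eqE => j' ?; apply: eq_below; lia.
rewrite -leqNgt => le_kj; apply: (act_sign_tail_up base) le_kj => j' lt_kj'.
by have [-> ->] := run j' ltac:(lia); exists (y j').
Qed.

Lemma ae1_flip_run (mu nu : nat -> E) d j :
  ae1 mu nu -> tail mu d != tail nu d -> d <= j ->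
  exists i, (forall j', d < j' <= j -> flipped i (mu j') (nu j')) /\
            act (sign i) (tail mu d) = tail nu d.
Proof.
move=> mu_nu neq_d le_dj; have [r r_le eq_j] := mu_nu j.
have r_neq0 : r != 0%R.
  apply: contra_neq neq_d => r0; move: eq_j; rewrite r0 act0 => /tail_eqE eq_mu.
  by apply/tail_eqE => j' ?; apply: eq_mu; lia.
have [i r_i] := sign_of_small r_le r_neq0.
have [|run eq_d] := @act_sign_tail_down mu nu i d (j - d) neq_d.
  by rewrite subnK // -r_i.
by exists i; split => // j' ?; apply: run; lia.
Qed.

Lemma xi_rel_of_flips (mu nu : nat -> E) i d :
  (forall j, j < d -> mu j = nu j) ->
  (forall j, d < j -> flipped i (mu j) (nu j)) ->
  (flipped i (mu d) (nu d) /\ (0 < d -> ~~ inH1 (mu d.-1)))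
  \/ flipped (~~ i) (mu d) (nu d) ->
  xi_rel x0e x1e mu nu.
Proof.
move=> eq_below flips [[flip_d out]|[h [mu_e nu_e]]]; right.
- have [h _] := flip_d.
  have [j|y run] := @choose_flips mu nu i (fun j => d <= j) h.
    by rewrite leq_eqVlt => /orP [/eqP <- //|]; exact: flips.
  exists d, i, y; split; first exact: run.
  case: (posnP d) => [d0|d_gt0]; first exact: Or31.
  by apply: Or33; split=> //; split=> [j ?|]; [apply: eq_below; lia|exact: out].
- have [y run] := @choose_flips mu nu i (fun j => d < j) h flips.
  exists d.+1, i, y; split; first exact: run.
  by apply: Or32; split=> //; split=> //; exists h; rewrite negbK in nu_e.
Qed.

Lemma xi_rel_of_ae1 (mu nu : nat -> E) : ae1 mu nu -> xi_rel x0e x1e mu nu.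
Proof.
move=> mu_nu; case: (classic (exists j, mu j != nu j)) => [ex_neq|no_neq]; last first.
  left; apply: functional_extensionality => j; apply/eqP; apply: contraT => neq.
  by case: no_neq; exists j.
case: (ex_minnP ex_neq) => d neq_d min_d.
have eq_below j : j < d -> mu j = nu j.
  by move=> lt_jd; apply/eqP; apply: contraTT lt_jd => /min_d; rewrite -leqNgt.
have neq_tail : tail mu d != tail nu d.
  by apply: contra_neq neq_d => /tail_eqE; apply.
have [i [run eq_d]] := ae1_flip_run mu_nu neq_tail (leqnSn d).
apply: (@xi_rel_of_flips _ _ i d eq_below); last exact: act_sign_first_diff.
move=> j lt_dj; have [i' [run' _]] := ae1_flip_run mu_nu neq_tail (ltnW lt_dj).
have i'_i : i' = i by apply: (flipped_sign_uniq (run' d.+1 _) (run d.+1 _)); lia.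
by rewrite -i'_i; apply: run'; lia.
Qed.

End OdometerAction.

Theorem theorem4p1 (V E HV HE : finType) (rE sE : E -> V) (rH sH : HE -> HV)
  (x0v x1v : HV -> V) (x0e x1e : HE -> E) :
  embedding_pair rE sE rH sH x0v x1v x0e x1e ->
  forall mu nu : nat -> E, linf rE sE mu -> linf rE sE nu ->
    (xi_rel x0e x1e mu nu <-> ae_equiv rE sE x0e x1e mu nu).
Proof.
move=> [[_ x0e_inj _ _] [_ x1e_inj _ _] _ disj] mu nu mu_path _; split.
- by move/(ae1_of_xi_rel x0e_inj x1e_inj disj); exact: ae_of_ae1.
- by move/(ae1_of_ae x0e_inj x1e_inj disj mu_path); exact: xi_rel_of_ae1.
Qed.
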